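(* There exists $\varepsilon_0>0$ such that for all $\varepsilon\in(0,\varepsilon_0)$ the following holds. Let $R^*\in\{R^{(1)},R^{(2)}\}$, let $\widehat T$ be a directed tree on $\{X,Y,Z\}$ satisfying $D_{\mathrm{KL}}(R^*\,\|\,R^*_{\widehat T})\le\frac{\varepsilon}{100}$, and let $\widehat R=\arg\min_{R\in\{R^{(1)},R^{(2)}\}}D_{\mathrm{KL}}(R\,\|\,R_{\widehat T})$. Then $\widehat R=R^*$.
   Context: Let $X,N_1,N_2$ be independent $\mathcal{N}(0,1)$ variables. $R^{(1)}$ is the distribution of $(X,Y,Z)$ with $Y=(1-\sqrt\varepsilon)X+\sqrt\varepsilon N_1$ and $Z=\frac12X+\frac12N_2$; $R^{(2)}$ is the distribution of $(X,Y,Z)$ with $Y=(1-\sqrt\varepsilon)X+\sqrt\varepsilon N_1$ and $Z=\frac12Y+\frac12N_2$. A directed tree on $\{X,Y,Z\}$ is a directed graph with a root from which every other vertex is reached by exactly one directed path. For a distribution $R$ and a directed tree $T$, $R_T=\arg\min_QD_{\mathrm{KL}}(R\,\|\,Q)$ over Gaussian $Q$ whose density factorizes as $\prod_vQ(v\mid\mathrm{pa}_T(v))$. *)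

From HB Require Import structures.
From mathcomp Require Import all_boot all_order all_algebra.
From mathcomp Require Import reals.
From mathcomp.analysis Require Import sequences exp trigo.
Set Implicit Arguments. Unset Strict Implicit. Unset Printing Implicit Defensive.
Import Order.TTheory GRing.Theory Num.Theory.
Local Open Scope ring_scope.

Section Defs.
Variable R : realType.

(* Coordinates: 0 = X, 1 = Y, 2 = Z. *)

Definition posdef n (S : 'M[R]_n) : Prop :=
  S^T = S /\ forall v : 'cV[R]_n, v != 0 -> 0 < (v^T *m S *m v) 0 0.

Definition gauss_density n (mu : 'cV[R]_n) (S : 'M[R]_n) (x : 'cV[R]_n) : R :=
  ((Num.sqrt (2 * pi)) ^+ n)^-1 * (Num.sqrt (\det S))^-1 *
  expR (- (2^-1) * ((x - mu)^T *m invmx S *m (x - mu)) 0 0).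

Definition sub_cV (A : {set 'I_3}) (v : 'cV[R]_3) : 'cV[R]_#|A| :=
  \col_(i < #|A|) v (enum_val i) 0.
Definition sub_M (A : {set 'I_3}) (S : 'M[R]_3) : 'M[R]_#|A| :=
  \matrix_(i < #|A|, j < #|A|) S (enum_val i) (enum_val j).

(** Marginal density of the coordinates in A under N(mu, S) (the marginal of a
    Gaussian is the Gaussian with the sub-mean and sub-covariance; for A = set0
    this is the constant 1). *)
Definition marg_density (A : {set 'I_3}) (mu : 'cV[R]_3) (S : 'M[R]_3)
    (x : 'cV[R]_3) : R :=
  gauss_density (sub_cV A mu) (sub_M A S) (sub_cV A x).

Definition dtree (E : rel 'I_3) : Prop :=
  exists r : 'I_3,
    (forall u, ~~ E u r) /\
    (forall v, v != r -> #|[set u | E u v]| = 1%N) /\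
    (forall v, connect E r v).

Definition parents (E : rel 'I_3) (v : 'I_3) : {set 'I_3} := [set u | E u v].

Definition factorizes (E : rel 'I_3) (mu : 'cV[R]_3) (S : 'M[R]_3) : Prop :=
  forall x : 'cV[R]_3,
    gauss_density mu S x =
    \prod_(v < 3) (marg_density (v |: parents E v) mu S x /
                   marg_density (parents E v) mu S x).

Definition KL (m1 : 'cV[R]_3) (S1 : 'M[R]_3) (m2 : 'cV[R]_3) (S2 : 'M[R]_3) : R :=
  2^-1 * (\tr (invmx S2 *m S1) + ((m2 - m1)^T *m invmx S2 *m (m2 - m1)) 0 0
          - 3%:R + ln (\det S2 / \det S1)).

(** (mQ, SQ) is R_T = argmin_Q KL(R || Q) over (nondegenerate) Gaussians Q
    whose density factorizes along T. *)
Definition is_tree_proj (E : rel 'I_3) (mR : 'cV[R]_3) (SR : 'M[R]_3)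
    (mQ : 'cV[R]_3) (SQ : 'M[R]_3) : Prop :=
  posdef SQ /\ factorizes E mQ SQ /\
  forall (mQ' : 'cV[R]_3) (SQ' : 'M[R]_3), posdef SQ' -> factorizes E mQ' SQ' ->
    KL mR SR mQ SQ <= KL mR SR mQ' SQ'.

Definition mx3 (a00 a01 a02 a10 a11 a12 a20 a21 a22 : R) : 'M[R]_3 :=
  \matrix_(i < 3, j < 3)
    nth 0 (nth [::] [:: [:: a00; a01; a02]; [:: a10; a11; a12]; [:: a20; a21; a22]] i) j.

(** Mixing matrices: (X,Y,Z)^T = A (X,N1,N2)^T with X,N1,N2 iid N(0,1). *)
Definition mixA (eps : R) (two : bool) : 'M[R]_3 :=
  let s := Num.sqrt eps in
  let a := 1 - s in
  if ~~ two then
    (* R^(1): Y = (1-sqrt eps) X + sqrt eps N1, Z = X/2 + N2/2 *)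
    mx3 1 0 0  a s 0  (2^-1) 0 (2^-1)
  else
    (* R^(2): Y = (1-sqrt eps) X + sqrt eps N1, Z = Y/2 + N2/2 *)
    mx3 1 0 0  a s 0  (a / 2) (s / 2) (2^-1).

(** R^(1) (two = false) and R^(2) (two = true): the law N(0, A A^T). *)
Definition Rmean : 'cV[R]_3 := 0.
Definition Rcov (eps : R) (two : bool) : 'M[R]_3 := mixA eps two *m (mixA eps two)^T.

End Defs.

From HB Require Import structures.
From mathcomp Require Import all_boot all_order all_algebra.
From mathcomp Require Import reals.
From mathcomp.analysis Require Import sequences exp trigo.
From mathcomp Require Import ring lra.
Set Implicit Arguments. Unset Strict Implicit. Unset Printing Implicit Defensive.
Import Order.TTheory GRing.Theory Num.Theory.
Local Open Scope ring_scope.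

(* A directed tree on {X, Y, Z} leaves some pair {a, b} unjoined, and since every vertex has
   at most one parent no factor Q(v | pa v) involves both x_a and x_b.  The log-density of a
   Gaussian factorizing along the tree then has no x_a x_b cross term: its precision matrix P
   has P_ab = 0.  For such P, completing squares in c (the third vertex) writes tr(P Sig) as
   t_1 + t_2 + t_3 with t_i > 0, and sum_i (t_i - 1 - ln t_i) >= 0 together with
   ln z >= 1 - 1/z gives
     2 KL(N(m1, Sig) || N(m2, P^-1)) >= tr(P Sig) - 3 - ln det(P Sig) >= rho^2,
   where rho^2 is the squared partial correlation of x_a and x_b given x_c under Sig.
   If the unjoined pair is {Y, Z}, R^(2) has rho^2 = eps / (1 + eps); otherwise R^(1) has
   rho^2 of order eps or 1.  Either way one of the two divergences exceeds eps/100, so the two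
   cannot both be small, which is what R-hat <> R-star would require. *)

Definition iX : 'I_3 := @Ordinal 3 0 isT.
Definition iY : 'I_3 := @Ordinal 3 1 isT.
Definition iZ : 'I_3 := @Ordinal 3 2 isT.

Lemma ord3_ind (P : 'I_3 -> Prop) : P iX -> P iY -> P iZ -> forall i, P i.
Proof.
move=> PX PY PZ [[|[|[|//]]] i3];
  [have -> : Ordinal i3 = iX | have -> : Ordinal i3 = iY | have -> : Ordinal i3 = iZ] => //;
  exact: val_inj.
Qed.

Lemma sum3 (R : nmodType) (F : 'I_3 -> R) : \sum_(i < 3) F i = F iX + F iY + F iZ.
Proof.
rewrite !big_ord_recr big_ord0 /= add0r.
by congr (F _ + F _ + F _); apply/val_inj.
Qed.

Lemma det_mx22 (R : comNzRingType) (B : 'M[R]_2) :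
  \det B = B ord0 ord0 * B ord_max ord_max - B ord0 ord_max * B ord_max ord0.
Proof.
rewrite (expand_det_row _ ord0) !big_ord_recl big_ord0 /cofactor !det_mx11 !mxE addr0.
have -> : lift ord0 ord0 = ord_max :> 'I_2 by apply/val_inj.
have -> : lift ord_max ord0 = ord0 :> 'I_2 by apply/val_inj.
rewrite /=; ring.
Qed.

Lemma det_mx33 (R : comNzRingType) (A : 'M[R]_3) : \det A =
  A iX iX * (A iY iY * A iZ iZ - A iY iZ * A iZ iY)
  - A iX iY * (A iY iX * A iZ iZ - A iY iZ * A iZ iX)
  + A iX iZ * (A iY iX * A iZ iY - A iY iY * A iZ iX).
Proof.
rewrite (expand_det_row _ iX) sum3 /cofactor !det_mx22 !mxE.
have -> : lift iX ord0 = iY by apply/val_inj.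
have -> : lift iX ord_max = iZ by apply/val_inj.
have -> : lift iY ord0 = iX by apply/val_inj.
have -> : lift iY ord_max = iZ by apply/val_inj.
have -> : lift iZ ord0 = iX by apply/val_inj.
have -> : lift iZ ord_max = iY by apply/val_inj.
rewrite /=; ring.
Qed.

Lemma det_sym3 (R : comNzRingType) (P : 'M[R]_3) a b c :
  P^T = P -> a != b -> a != c -> b != c ->
  \det P = P a a * P b b * P c c + 2 * P a b * P b c * P a c
           - P a a * P b c ^+ 2 - P b b * P a c ^+ 2 - P c c * P a b ^+ 2.
Proof.
move=> PT; have sym i j : P j i = P i j by rewrite -[in LHS]PT mxE.
rewrite det_mx33; move: a b c; apply: ord3_ind; apply: ord3_ind; apply: ord3_ind => //= _ _ _;
  rewrite ?(sym iX iY) ?(sym iX iZ) ?(sym iY iZ); ring.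
Qed.

Lemma mxtrace_mul_sym3 (R : comNzRingType) (P S : 'M[R]_3) a b c :
  P^T = P -> S^T = S -> a != b -> a != c -> b != c ->
  \tr (P *m S) = P a a * S a a + P b b * S b b + P c c * S c c
    + 2 * (P a b * S a b) + 2 * (P a c * S a c) + 2 * (P b c * S b c).
Proof.
move=> PT ST; have symP i j : P j i = P i j by rewrite -[in LHS]PT mxE.
have symS i j : S j i = S i j by rewrite -[in LHS]ST mxE.
rewrite /mxtrace sum3 !mxE !sum3; move: a b c;
  apply: ord3_ind; apply: ord3_ind; apply: ord3_ind => //= _ _ _;
  rewrite ?(symP iX iY) ?(symP iX iZ) ?(symP iY iZ) ?(symS iX iY) ?(symS iX iZ) ?(symS iY iZ); ring.
Qed.

Section Posdef.
Variable R : realType.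

Lemma delta_mx_neq0 m n (i : 'I_m) (j : 'I_n) : delta_mx i j != 0 :> 'M[R]_(m, n).
Proof. by apply/negP => /eqP/matrixP/(_ i j); rewrite !mxE !eqxx => /eqP; rewrite oner_eq0. Qed.

Lemma qf_delta n (S : 'M[R]_n) (i j : 'I_n) :
  ((delta_mx i 0 : 'cV[R]_n)^T *m S *m (delta_mx j 0 : 'cV[R]_n)) 0 0 = S i j.
Proof. by rewrite trmx_delta -rowE -colE !mxE. Qed.

Lemma qf_delta2 n (S : 'M[R]_n) (i j : 'I_n) (a b : R) :
  let v : 'cV[R]_n := a *: delta_mx i 0 + b *: delta_mx j 0 in
  (v^T *m S *m v) 0 0 = a ^+ 2 * S i i + a * b * (S i j + S j i) + b ^+ 2 * S j j.
Proof.
have eD (A B : 'M[R]_1) : (A + B) 0 0 = A 0 0 + B 0 0 by rewrite mxE.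
have eZ c (A : 'M[R]_1) : (c *: A) 0 0 = c * A 0 0 by rewrite mxE.
rewrite /= !(linearD, linearZ) /= !(mulmxDl, mulmxDr, =^~ scalemxAl, =^~ scalemxAr).
by rewrite !(eD, eZ) !qf_delta; ring.
Qed.

Lemma posdef_symE n (S : 'M[R]_n) : posdef S -> forall i j, S j i = S i j.
Proof. by case=> ST _ i j; rewrite -[in LHS]ST mxE. Qed.

Lemma posdef_diag_gt0 n (S : 'M[R]_n) : posdef S -> forall i, 0 < S i i.
Proof. by case=> _ HS i; rewrite -qf_delta; apply/HS/delta_mx_neq0. Qed.

Lemma posdef_minor_gt0 n (S : 'M[R]_n) : posdef S -> forall i j, i != j ->
  0 < S i i * S j j - S i j ^+ 2.
Proof.
move=> PS i j ij; have [_ HS] := PS.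
set v : 'cV_n := S j j *: delta_mx i 0 + (- S i j) *: delta_mx j 0.
have v0 : v != 0.
  apply: contraTneq (posdef_diag_gt0 PS j) => /matrixP/(_ i 0).
  by rewrite !mxE eqxx (negbTE ij) mulr1 mulr0 addr0 => ->; rewrite ltxx.
have := HS v v0; rewrite qf_delta2 (posdef_symE PS i j).
have -> : S j j ^+ 2 * S i i + S j j * - S i j * (S i j + S i j) + (- S i j) ^+ 2 * S j j
          = S j j * (S i i * S j j - S i j ^+ 2) by ring.
by rewrite pmulr_rgt0 // posdef_diag_gt0.
Qed.

Lemma posdef_det_gt0 (S : 'M[R]_3) : posdef S -> 0 < \det S.
Proof.
move=> PS; have [ST HS] := PS.
(* v^T S v = det S * adj(S)_ZZ for the column v of the adjugate. *)
pose v : 'cV[R]_3 := \adj S *m delta_mx iZ 0.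
have cof : \adj S iZ iZ = S iX iX * S iY iY - S iX iY ^+ 2.
  rewrite mxE /cofactor det_mx22 !mxE.
  have -> : lift iZ ord0 = iX by apply/val_inj.
  have -> : lift iZ ord_max = iY by apply/val_inj.
  by rewrite (posdef_symE PS iX iY); ring.
have v0 : v != 0.
  apply: contraTneq (posdef_minor_gt0 PS (isT : iX != iY)) => /matrixP/(_ iZ 0).
  by rewrite /v -colE mxE cof mxE => ->; rewrite ltxx.
have := HS v v0.
rewrite /v trmx_mul trmx_adj ST -(mulmxA _ (\adj S)) mul_adj_mx mul_mx_scalar.
rewrite -scalemxAl mulmxA mxE qf_delta cof.
by rewrite pmulr_lgt0 // posdef_minor_gt0.
Qed.

Lemma posdef_unitmx (S : 'M[R]_3) : posdef S -> S \in unitmx.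
Proof. by move=> PS; rewrite unitmxE unitfE gt_eqF // posdef_det_gt0. Qed.

Lemma posdef_invmx (S : 'M[R]_3) : posdef S -> posdef (invmx S).
Proof.
move=> PS; have Su := posdef_unitmx PS; have [ST HS] := PS; split.
  by rewrite trmx_inv ST.
move=> v v0; have -> : v^T *m invmx S *m v = (invmx S *m v)^T *m S *m (invmx S *m v).
  by rewrite trmx_mul trmx_inv ST -!mulmxA (mulmxA S) mulmxV // mul1mx.
apply: HS; apply: contraNneq v0 => w0.
by rewrite -(mulKVmx Su v) w0 mulmx0.
Qed.

Lemma posdef_mulmx_tr n (A : 'M[R]_n) : A \in unitmx -> posdef (A *m A^T).
Proof.
move=> Au; split; first by rewrite trmx_mul trmxK.
move=> v v0; set w := A^T *m v.
have w0 : w != 0.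
  have ATu : A^T \in unitmx by rewrite unitmx_tr.
  by apply: contraNneq v0 => w0; rewrite -(mulKmx ATu v) -/w w0 mulmx0.
have -> : v^T *m (A *m A^T) *m v = w^T *m w by rewrite trmx_mul trmxK !mulmxA.
have sq_ge0 i : 0 <= w^T 0 i * w i 0 by rewrite mxE -expr2 sqr_ge0.
rewrite mxE lt_def (sumr_ge0 _ (fun i _ => sq_ge0 i)) andbT.
apply: contra w0 => /eqP/(psumr_eq0P (fun i _ => sq_ge0 i)) w2.
apply/eqP/matrixP => i j; rewrite ord1 [RHS]mxE; apply/eqP.
by have := w2 i isT; rewrite mxE => /eqP; rewrite mulf_eq0 orbb => /eqP ->.
Qed.

End Posdef.

Lemma dtree_one_parent (T : rel 'I_3) : dtree T -> forall u u' v, T u v -> T u' v -> u = u'.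
Proof.
case=> r [root [one _]] u u' v uv u'v.
have vr : v != r by apply: contraTneq uv => ->; exact: root.
have /eqP/cards1P [p Ep] := one v vr.
have pa w : T w v -> w = p by move=> wv; apply/set1P; rewrite -Ep inE.
by rewrite (pa u uv) (pa u' u'v).
Qed.

Definition separated (T : rel 'I_3) (a b : 'I_3) : Prop :=
  forall v, ~~ ((a \in v |: parents T v) && (b \in v |: parents T v)).

Lemma separated_nonadjacent (T : rel 'I_3) a b : dtree T -> a != b ->
  ~~ T a b -> ~~ T b a -> separated T a b.
Proof.
move=> tT ab nab nba v; rewrite !inE.
apply/negP => /andP [/orP [/eqP av|av] /orP [/eqP bv|bv]].
- by move: ab; rewrite av bv eqxx.
- by move: nba; rewrite av bv.
- by move: nab; rewrite bv av.
- by move: ab; rewrite (dtree_one_parent tT av bv) eqxx.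
Qed.

Lemma dtree_separated (T : rel 'I_3) : dtree T ->
  [\/ separated T iY iZ, separated T iX iZ | separated T iX iY].
Proof.
move=> tT; have [r [root _]] := tT.
have one u u' v : u != u' -> ~~ (T u v && T u' v).
  by move=> uu'; apply: contra uu' => /andP [uv u'v]; rewrite (dtree_one_parent tT uv u'v).
(* The root has no parent and the other two vertices one each: only two pairs are joined. *)
have : [|| ~~ T iY iZ && ~~ T iZ iY, ~~ T iX iZ && ~~ T iZ iX | ~~ T iX iY && ~~ T iY iX].
  move: (one iY iZ iX isT) (one iX iZ iY isT) (one iX iY iZ isT).
  move: r root; apply: ord3_ind => root; move: (root iX) (root iY) (root iZ);
  by case: (T iX iY); case: (T iY iX); case: (T iX iZ); case: (T iZ iX);
     case: (T iY iZ); case: (T iZ iY).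
by case/or3P => /andP [n1 n2]; [apply: Or31 | apply: Or32 | apply: Or33];
  apply: separated_nonadjacent.
Qed.

Section Factorization.
Variable R : realType.

Lemma marg_density_local (mu : 'cV[R]_3) S (A : {set 'I_3}) (x y : 'cV[R]_3) :
  {in A, forall i, x i 0 = y i 0} -> marg_density A mu S x = marg_density A mu S y.
Proof.
move=> xy; rewrite /marg_density; congr gauss_density.
by apply/matrixP => i j; rewrite !mxE xy // enum_valP.
Qed.

Lemma factorizes_rectangle (T : rel 'I_3) (mu : 'cV[R]_3) S a b (x : 'cV[R]_3) :
  factorizes T mu S -> separated T a b ->
  let g := gauss_density mu S in
  let ea : 'cV[R]_3 := delta_mx a 0 in let eb : 'cV[R]_3 := delta_mx b 0 in
  g (x + ea + eb) * g x = g (x + ea) * g (x + eb).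
Proof.
move=> fT sep g ea eb; rewrite /g /ea /eb !fT -!big_split /=; apply: eq_bigr => v _.
set F := fun y => marg_density (v |: parents T v) mu S y / marg_density (parents T v) mu S y.
have Floc (y z : 'cV[R]_3) : {in v |: parents T v, forall i, y i 0 = z i 0} -> F y = F z.
  move=> yz; rewrite /F (marg_density_local mu S yz); congr (_ / _).
  by apply: marg_density_local => i Hi; rewrite yz // setU1r.
have shift c y : c \notin v |: parents T v -> F (y + delta_mx c 0) = F y.
  move=> nc; apply: Floc => i Hi.
  have /negbTE ic : i != c by apply: contraNneq nc => <-.
  by rewrite !mxE ic addr0.
change (F (x + delta_mx a 0 + delta_mx b 0) * F x
        = F (x + delta_mx a 0) * F (x + delta_mx b 0)).
case/nandP: (sep v) => [na|nb].
  by rewrite (shift a x) // -addrAC (shift a) // mulrC.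
by rewrite (shift b) // (shift b x).
Qed.

Lemma gauss_density_rectangle (mu : 'cV[R]_3) (S : 'M[R]_3) a b : posdef S ->
  let g := gauss_density mu S in
  let ea : 'cV[R]_3 := delta_mx a 0 in let eb : 'cV[R]_3 := delta_mx b 0 in
  g (mu + ea + eb) * g mu = g (mu + ea) * g (mu + eb) ->
  invmx S a b + invmx S b a = 0.
Proof.
move=> PS g ea eb.
set K := ((Num.sqrt (2 * pi)) ^+ 3)^-1 * (Num.sqrt (\det S))^-1.
have gE u : g (mu + u) = K * expR (- 2^-1 * (u^T *m invmx S *m u) 0 0).
  by rewrite /g /gauss_density addrC addKr.
have K0 : K != 0.
  by rewrite mulf_neq0 // invr_eq0 ?expf_neq0 // gt_eqF // sqrtr_gt0
    ?posdef_det_gt0 ?mulr_gt0 ?pi_gt0.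
rewrite -[in g mu](addr0 mu) -addrA !gE mulrACA [RHS]mulrACA -!expRD.
move/(mulfI (mulf_neq0 K0 K0))/expR_inj.
have := qf_delta2 (invmx S) a b 1 1; rewrite !scale1r /= => ->.
rewrite !qf_delta trmx0 !mul0mx mxE expr1n !mul1r; lra.
Qed.

Lemma factorizes_invmx_eq0 (T : rel 'I_3) (mu : 'cV[R]_3) S a b :
  posdef S -> factorizes T mu S -> separated T a b -> invmx S a b = 0.
Proof.
move=> PS fT sep; have := gauss_density_rectangle PS (factorizes_rectangle mu fT sep).
by rewrite (posdef_symE (posdef_invmx PS) a b); lra.
Qed.

End Factorization.


Section KLBound.
Variable R : realType.

Definition partial_corr2 (S : 'M[R]_3) (a b c : 'I_3) : R :=
  (S a b * S c c - S a c * S b c) ^+ 2 /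
  ((S a a * S c c - S a c ^+ 2) * (S b b * S c c - S b c ^+ 2)).

Lemma ln_le_subr1 (x : R) : 0 < x -> ln x <= x - 1.
Proof. by move=> x0; have := @le_ln1Dx R (x - 1); rewrite addrCA subrr addr0; apply; lra. Qed.

Lemma le_sum_sub_ln (t1 t2 t3 Z r : R) :
  0 < t1 -> 0 < t2 -> 0 < t3 -> 0 < Z -> Z^-1 <= 1 - r ->
  r <= t1 + t2 + t3 - 3 - ln (t1 * t2 * t3 / Z).
Proof.
move=> t10 t20 t30 Z0 Zr.
rewrite ln_div ?lnM ?posrE ?mulr_gt0 //.
have := ln_le_subr1 t10; have := ln_le_subr1 t20; have := ln_le_subr1 t30.
have := @ln_le_subr1 Z^-1; rewrite invr_gt0 lnV ?posrE // => /(_ Z0); lra.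
Qed.

Lemma det2_le_mul_quad (saa sac scc k : R) :
  saa * scc - sac ^+ 2 <= scc * (saa + 2 * k * sac + k ^+ 2 * scc).
Proof.
rewrite -subr_ge0.
have -> : scc * (saa + 2 * k * sac + k ^+ 2 * scc) - (saa * scc - sac ^+ 2) = (k * scc + sac) ^+ 2
  by ring.
exact: sqr_ge0.
Qed.

Lemma partial_corr2_le_trace_logdet (P S : 'M[R]_3) a b c :
  posdef P -> posdef S -> a != b -> a != c -> b != c -> P a b = 0 ->
  partial_corr2 S a b c <= \tr (P *m S) - 3 - ln (\det P * \det S).
Proof.
move=> PP PS ab ac bc Pab.
have [[PT _] [ST _]] := (PP, PS).
have dP := posdef_det_gt0 PP; have dS := posdef_det_gt0 PS.
have Pa := posdef_diag_gt0 PP a; have Pb := posdef_diag_gt0 PP b.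
have Sc := posdef_diag_gt0 PS c.
have Ma := posdef_minor_gt0 PS ac; have Mb := posdef_minor_gt0 PS bc.
set ua := S a a + 2 * (P a c / P a a) * S a c + (P a c / P a a) ^+ 2 * S c c.
set ub := S b b + 2 * (P b c / P b b) * S b c + (P b c / P b b) ^+ 2 * S c c.
(* [ua] is the variance of X_a + (P_ac / P_aa) X_c, at least the residual variance of X_a
   given X_c; likewise [ub]. *)
have uaM : S a a * S c c - S a c ^+ 2 <= S c c * ua by exact: det2_le_mul_quad.
have ubM : S b b * S c c - S b c ^+ 2 <= S c c * ub by exact: det2_le_mul_quad.
have ua0 : 0 < ua by rewrite -(pmulr_rgt0 _ Sc); exact: lt_le_trans uaM.
have ub0 : 0 < ub by rewrite -(pmulr_rgt0 _ Sc); exact: lt_le_trans ubM.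
set Z := ua * ub * S c c / \det S.
have -> : \det P * \det S = P a a * ua * (P b b * ub) * (\det P / (P a a * P b b) * S c c) / Z.
  by rewrite /Z; field; rewrite !gt_eqF.
have -> : \tr (P *m S) = P a a * ua + P b b * ub + \det P / (P a a * P b b) * S c c.
  rewrite (mxtrace_mul_sym3 PT ST ab ac bc) (det_sym3 PT ab ac bc) Pab /ua /ub.
  by field; rewrite !gt_eqF.
apply: le_sum_sub_ln; rewrite ?mulr_gt0 ?divr_gt0 ?invr_gt0 ?mulr_gt0 //.
have sylvester : (S a a * S c c - S a c ^+ 2) * (S b b * S c c - S b c ^+ 2)
    - (S a b * S c c - S a c * S b c) ^+ 2 = S c c * \det S.
  by rewrite (det_sym3 ST ab ac bc); ring.
have -> : 1 - partial_corr2 S a b c = S c c * \det S /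
    ((S a a * S c c - S a c ^+ 2) * (S b b * S c c - S b c ^+ 2)).
  by rewrite /partial_corr2 -sylvester; field; rewrite !gt_eqF.
have -> : Z^-1 = S c c * \det S / (S c c * ua * (S c c * ub)).
  by rewrite /Z; field; rewrite !gt_eqF.
rewrite ler_pM2l ?mulr_gt0 // lef_pV2 ?posrE ?mulr_gt0 //.
by apply: ler_pM => //; apply: ltW.
Qed.

Lemma trace_logdet_le_KL (m1 m2 : 'cV[R]_3) (Sig S : 'M[R]_3) :
  posdef Sig -> posdef S ->
  \tr (invmx S *m Sig) - 3 - ln (\det (invmx S) * \det Sig) <= 2 * KL m1 Sig m2 S.
Proof.
move=> PSig PS; have dSig := posdef_det_gt0 PSig; have dS := posdef_det_gt0 PS.
have q0 : 0 <= ((m2 - m1)^T *m invmx S *m (m2 - m1)) 0 0.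
  have [->|nz] := eqVneq (m2 - m1) 0; first by rewrite mulmx0 mxE.
  by apply/ltW; case: (posdef_invmx PS) => _; apply.
rewrite /KL det_inv lnM ?lnV ?ln_div ?posrE ?invr_gt0 //; lra.
Qed.

Lemma partial_corr2_le_KL (m1 m2 : 'cV[R]_3) (Sig S : 'M[R]_3) a b c :
  posdef Sig -> posdef S -> a != b -> a != c -> b != c -> invmx S a b = 0 ->
  partial_corr2 Sig a b c <= 2 * KL m1 Sig m2 S.
Proof.
move=> PSig PS ab ac bc Pab; apply: le_trans (trace_logdet_le_KL m1 m2 PSig PS).
exact: partial_corr2_le_trace_logdet (posdef_invmx PS) PSig ab ac bc Pab.
Qed.

End KLBound.

Section Covariances.
Variable R : realType.
Variable eps : R.
Hypotheses (eps_gt0 : 0 < eps) (eps_lt : eps < 4^-1).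

Let s := Num.sqrt eps.
Let q := (1 - s) ^+ 2 + s ^+ 2.
Let eps_sqr : eps = s ^+ 2. Proof. by rewrite sqr_sqrtr // ltW. Qed.
Let s_bounds : 0 < s < 2^-1.
Proof. by rewrite sqrtr_gt0 eps_gt0 /=; move: eps_lt; rewrite eps_sqr; nra. Qed.

Lemma RcovE_false : Rcov eps false =
  mx3 1 (1 - s) 2^-1  (1 - s) q ((1 - s) / 2)  2^-1 ((1 - s) / 2) 2^-1.
Proof.
by apply/matrixP; apply: ord3_ind; apply: ord3_ind;
  rewrite /Rcov /mixA /= !mxE sum3 !mxE /= -/s /q; field.
Qed.

Lemma RcovE_true : Rcov eps true =
  mx3 1 (1 - s) ((1 - s) / 2)  (1 - s) q (q / 2)  ((1 - s) / 2) (q / 2) ((q + 1) / 4).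
Proof.
by apply/matrixP; apply: ord3_ind; apply: ord3_ind;
  rewrite /Rcov /mixA /= !mxE sum3 !mxE /= -/s /q; field.
Qed.

Lemma posdef_Rcov two : posdef (Rcov eps two).
Proof.
apply: posdef_mulmx_tr; rewrite unitmxE unitfE det_mx33.
have /andP [s0 _] := s_bounds.
by case: two; rewrite /mixA /= !mxE /= -/s; apply/lt0r_neq0; nra.
Qed.

Lemma partial_corr2_Rcov_true_YZ : eps / 50%:R < partial_corr2 (Rcov eps true) iY iZ iX.
Proof.
have /andP [s0 s1] := s_bounds.
have -> : partial_corr2 (Rcov eps true) iY iZ iX = s ^+ 2 / (1 + s ^+ 2).
  rewrite RcovE_true /partial_corr2 !mxE /= /q.
  by field; repeat (apply/andP; split); apply/lt0r_neq0; nra.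
rewrite eps_sqr ltr_pM2l ?exprn_gt0 // ltf_pV2 ?posrE //; nra.
Qed.

Lemma partial_corr2_Rcov_false_XZ : eps / 50%:R < partial_corr2 (Rcov eps false) iX iZ iY.
Proof.
have /andP [s0 s1] := s_bounds.
have -> : partial_corr2 (Rcov eps false) iX iZ iY = s ^+ 2 / ((1 - s) ^+ 2 + 2 * s ^+ 2).
  rewrite RcovE_false /partial_corr2 !mxE /= /q.
  by field; repeat (apply/andP; split); apply/lt0r_neq0; nra.
rewrite eps_sqr ltr_pM2l ?exprn_gt0 // ltf_pV2 ?posrE //; nra.
Qed.

Lemma partial_corr2_Rcov_false_XY : eps / 50%:R < partial_corr2 (Rcov eps false) iX iY iZ.
Proof.
have /andP [s0 s1] := s_bounds.
have -> : partial_corr2 (Rcov eps false) iX iY iZ = (1 - s) ^+ 2 / ((1 - s) ^+ 2 + 2 * s ^+ 2).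
  rewrite RcovE_false /partial_corr2 !mxE /= /q.
  by field; repeat (apply/andP; split); apply/lt0r_neq0; nra.
have r0 : 0 < (1 - s) ^+ 2 + 2 * s ^+ 2 by nra.
rewrite eps_sqr ltr_pdivlMr // mulrAC ltr_pdivrMr //.
have : s ^+ 2 < 4^-1 by nra.
have : 4^-1 < (1 - s) ^+ 2 by nra.
nra.
Qed.

End Covariances.

Lemma KL_factorized_gt (R : realType) (eps : R) (T : rel 'I_3) (m0 : 'cV[R]_3)
    (m : bool -> 'cV[R]_3) (S : bool -> 'M[R]_3) :
  0 < eps -> eps < 4^-1 -> dtree T ->
  (forall i, posdef (S i) /\ factorizes T (m i) (S i)) ->
  exists i, eps / 100%:R < KL m0 (Rcov eps i) (m i) (S i).
Proof.
move=> e0 e1 tT fS.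
have KL_gt i a b c : separated T a b -> a != b -> a != c -> b != c ->
    eps / 50%:R < partial_corr2 (Rcov eps i) a b c ->
    eps / 100%:R < KL m0 (Rcov eps i) (m i) (S i).
  move=> sep ab ac bc lt; have [PS fT] := fS i.
  have := partial_corr2_le_KL m0 (m i) (posdef_Rcov e0 e1 i) PS ab ac bc
    (factorizes_invmx_eq0 PS fT sep).
  lra.
case/dtree_separated: tT => sep.
- by exists true; apply: (KL_gt _ _ _ iX sep) => //; exact: partial_corr2_Rcov_true_YZ.
- by exists false; apply: (KL_gt _ _ _ iY sep) => //; exact: partial_corr2_Rcov_false_XZ.
- by exists false; apply: (KL_gt _ _ _ iZ sep) => //; exact: partial_corr2_Rcov_false_XY.
Qed.

Theorem lemma7 (R : realType) :
  exists eps0 : R, 0 < eps0 /\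
  forall eps : R, 0 < eps -> eps < eps0 ->
  forall (istar : bool) (T : rel 'I_3), dtree T ->
  forall (mQ : bool -> 'cV[R]_3) (SQ : bool -> 'M[R]_3),
    (forall i, is_tree_proj T (Rmean R) (Rcov eps i) (mQ i) (SQ i)) ->
    KL (Rmean R) (Rcov eps istar) (mQ istar) (SQ istar) <= eps / 100%:R ->
    forall ihat : bool,
      (forall j : bool, KL (Rmean R) (Rcov eps ihat) (mQ ihat) (SQ ihat)
                        <= KL (Rmean R) (Rcov eps j) (mQ j) (SQ j)) ->
      ihat = istar.
Proof.
exists 4^-1; split; first by rewrite invr_gt0.
move=> eps e0 e1 istar T tT mQ SQ proj KLstar ihat KLhat.
have fS i : posdef (SQ i) /\ factorizes T (mQ i) (SQ i) by have [PS [fT _]] := proj i.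
have [i KLi] := KL_factorized_gt (Rmean R) e0 e1 tT fS.
apply/eqP; apply: contraLR KLi => ne; rewrite -leNgt.
have [->|ni] := eqVneq i istar; first exact: KLstar.
have -> : i = ihat by move: ni ne; case: (i); case: (ihat); case: (istar).
exact: le_trans (KLhat istar) KLstar.
Qed.
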